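(* Consider a qubit with two measurement settings $x,y\in\{0,1\}$, outcomes $\pm$, arbitrary instruments (the same instrument used for the same setting at both time steps), and let $p(ab|xy)$ be the probability of outcome $a$ for measurement $x$ at the first time step on the initial state followed by outcome $b$ for measurement $y$ at the second step; set $\mathcal{B}_1=p(++|00)+p(++|11)+p(+-|01)+p(+-|10)$. For $p,w_{+|0},w_{+|1}\in[0,1]$, let $B_1(p,w_{+|0},w_{+|1})$ be the maximum of $\mathcal{B}_1$ over all initial states with Bloch vector length $p$ and all instruments such that the post-measurement state after measurement $i$ with outcome $+$ has Bloch vector length $w_{+|i}$, $i=0,1$. Then, for fixed $p$ and fixed $w_{+|1-i}$, $B_1(p,w_{+|0},w_{+|1})$ is monotonically non-decreasing as a function of $w_{+|i}$ (equivalently of the purity $\frac12(1+w_{+|i}^2)$). In particular $B_1(p,w_{\max},w_{\max})\ge B_1(p,w_{+|0},w_{+|1})$ where $w_{\max}=\max_i w_{+|i}$.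
   Context: A qubit state is $\varrho=\frac12(\mathbb{1}+r\,\vec\alpha\cdot\vec\sigma)$ with $|\vec\alpha|=1$, $0\le r\le1$ the Bloch vector length, and purity $\frac12(1+r^2)$. An instrument is a collection of completely positive maps indexed by outcomes whose sum is trace preserving. *)

From HB Require Import structures.
From mathcomp Require Import all_boot all_order all_algebra.
From mathcomp Require Import complex.
From mathcomp Require Import classical_sets reals.
Set Implicit Arguments. Unset Strict Implicit. Unset Printing Implicit Defensive.
Import Order.TTheory GRing.Theory Num.Theory.
Local Open Scope ring_scope.

Section Qubit.
Variable R : realType.
Local Notation C := (R[i]).
Local Notation M2 := ('M[C]_2).

Definition pauliX : M2 := \matrix_(i < 2, j < 2) (if i == j then 0 else 1).
Definition pauliY : M2 := \matrix_(i < 2, j < 2)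
  (if i == j then 0 else if (i == 0 :> nat) then - 'i else 'i).
Definition pauliZ : M2 := \matrix_(i < 2, j < 2)
  (if i == j then (if (i == 0 :> nat) then 1 else -1) else 0).

Definition has_bloch_len (sigma : M2) (r : R) : Prop :=
  exists a1 a2 a3 : R, a1 ^+ 2 + a2 ^+ 2 + a3 ^+ 2 = 1 /\
    sigma = (2%:R)^-1 *: (1%:M + (r%:C)%C *:
      ((a1%:C)%C *: pauliX + (a2%:C)%C *: pauliY + (a3%:C)%C *: pauliZ)).

Definition adjmx m n (A : 'M[C]_(m, n)) : 'M[C]_(n, m) := (map_mx Num.conj A)^T.

Definition psd m (A : 'M[C]_m) : Prop :=
  forall v : 'cV[C]_m, 0 <= (adjmx v *m A *m v) 0 0.

Definition is_linear_map (f : M2 -> M2) : Prop :=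
  forall (a : C) (X Y : M2), f (a *: X + Y) = a *: f X + f Y.

(* complete positivity: id_n (x) f maps PSD block matrices to PSD ones, all n *)
Definition completely_positive (f : M2 -> M2) : Prop :=
  forall (n : nat) (B : 'I_n -> 'I_n -> M2),
    psd (\mxblock_(i < n, j < n) (B i j : 'M[C]_(2, 2))) ->
    psd (\mxblock_(i < n, j < n) (f (B i j) : 'M[C]_(2, 2))).

(* instrument with outcomes +/- (true = +, false = -) *)
Definition instrument (I : bool -> M2 -> M2) : Prop :=
  (forall a, is_linear_map (I a) /\ completely_positive (I a)) /\
  (forall X : M2, \tr (I true X + I false X) = \tr X).

Definition seqprob (rho : M2) (Ix Iy : bool -> M2 -> M2) (a b : bool) : R :=
  complex.Re (\tr (Iy b (Ix a rho))).

Definition calB1 (rho : M2) (I0 I1 : bool -> M2 -> M2) : R :=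
  seqprob rho I0 I0 true true + seqprob rho I1 I1 true true +
  seqprob rho I0 I1 true false + seqprob rho I1 I0 true false.

(* normalized post-measurement state after outcome + of instrument I on rho,
   required to exist (nonzero probability) and to have Bloch length w *)
Definition post_plus_len (rho : M2) (I : bool -> M2 -> M2) (w : R) : Prop :=
  0 < \tr (I true rho) /\ has_bloch_len ((\tr (I true rho))^-1 *: I true rho) w.

Definition admissible (p w0 w1 : R) (rho : M2) (I0 I1 : bool -> M2 -> M2) : Prop :=
  has_bloch_len rho p /\ instrument I0 /\ instrument I1 /\
  post_plus_len rho I0 w0 /\ post_plus_len rho I1 w1.

Definition B1 (p w0 w1 : R) : R :=
  sup [set v | exists (rho : M2) (I0 I1 : bool -> M2 -> M2),
                 admissible p w0 w1 rho I0 I1 /\ v = calB1 rho I0 I1].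

End Qubit.

(* Replacing the [+] branch of
   [I0] by the measure-and-prepare map [X |-> tr (I0 + X) t], with [t] a state
   of Bloch length [w'], gives again an instrument (complete positivity follows
   from writing [t] as a nonnegative combination of rank-one projectors) with
   the same [+] probabilities and with [+] post-measurement state [t].  Now
   [calB1] depends on the [+] branch of [I0] only through a real-linear
   functional of the unnormalised post-measurement state, and a state of Bloch
   length [w <= w'] along [a] is a convex combination of the states of length
   [w'] along [a] and [-a]; so for one of these two choices of [t] the value of
   [calB1] does not decrease.  The suprema compare because [calB1 <= 4] and the
   admissible sets for [w] and [w'] are empty or not simultaneously.
   Exchanging the two settings gives monotonicity in [w1]. *)

From HB Require Import structures.
From mathcomp Require Import all_boot all_order all_algebra.
From mathcomp Require Import complex.
From mathcomp Require Import classical_sets reals.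
From mathcomp Require Import ring lra.
Import Order.TTheory GRing.Theory Num.Theory.
Local Open Scope ring_scope.
Set Implicit Arguments.
Unset Strict Implicit.
Unset Printing Implicit Defensive.

Section PositiveMatrices.
Variable R : realType.
Local Notation C := R[i].

Lemma adjmxK m n (A : 'M[C]_(m, n)) : adjmx (adjmx A) = A.
Proof. by apply/matrixP => i j; rewrite !mxE conjCK. Qed.

Lemma adjmxD m n (A B : 'M[C]_(m, n)) : adjmx (A + B) = adjmx A + adjmx B.
Proof. by rewrite /adjmx map_mxD linearD. Qed.

Lemma adjmxZ m n (a : C) (A : 'M[C]_(m, n)) : adjmx (a *: A) = a^* *: adjmx A.
Proof. by rewrite /adjmx map_mxZ linearZ. Qed.

Lemma adjmxM m n p (A : 'M[C]_(m, n)) (B : 'M[C]_(n, p)) :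
  adjmx (A *m B) = adjmx B *m adjmx A.
Proof. by rewrite /adjmx map_mxM trmx_mul. Qed.

Lemma adjmx1 n : adjmx (1%:M : 'M[C]_n) = 1%:M.
Proof. by rewrite /adjmx map_mx1 trmx1. Qed.

Lemma adjmx_delta m (k : 'I_m) : adjmx (delta_mx k 0 : 'cV[C]_m) = delta_mx 0 k.
Proof. by rewrite /adjmx map_delta_mx trmx_delta. Qed.

Lemma adjmx_mxcol n (p_ : 'I_n -> nat) (v_ : forall i, 'cV[C]_(p_ i)) :
  adjmx (\mxcol_i v_ i) = \mxrow_i adjmx (v_ i).
Proof. by apply/matrixP => a b; rewrite !mxE. Qed.

Lemma quad_mxblock n (p_ : 'I_n -> nat) (B : forall i j, 'M[C]_(p_ i, p_ j))
    (v : 'cV[C]_(\sum_i p_ i)) :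
  (adjmx v *m \mxblock_(i < n, j < n) B i j *m v) 0 0 =
  \sum_i \sum_j (adjmx (submxcol v i) *m B i j *m submxcol v j) 0 0.
Proof.
rewrite -[v]submxcolK adjmx_mxcol mul_mxrow_mxblock mul_mxrow_mxcol summxE.
under eq_bigr do rewrite mulmx_suml summxE.
by rewrite exchange_big; apply: eq_bigr => i _; apply: eq_bigr => j _; rewrite !mxcolK.
Qed.

Lemma quad_delta m (A : 'M[C]_m) (k : 'I_m) :
  (adjmx (delta_mx k 0 : 'cV[C]_m) *m A *m (delta_mx k 0 : 'cV[C]_m)) 0 0 = A k k.
Proof. by rewrite adjmx_delta -rowE -colE !mxE. Qed.

Lemma quad_rank1 m (x y u : 'cV[C]_m) :
  (adjmx x *m (u *m adjmx u) *m y) 0 0 = ((adjmx u *m x) 0 0)^* * (adjmx u *m y) 0 0.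
Proof.
rewrite mulmxA -mulmxA [LHS]mxE big_ord1.
rewrite -[adjmx x *m u]adjmxK adjmxM adjmxK.
by rewrite [X in X * _]mxE [X in X * _]mxE.
Qed.

Lemma psd_mxtrace_ge0 m (A : 'M[C]_m) : psd A -> 0 <= \tr A.
Proof. by move=> psdA; apply: sumr_ge0 => k _; rewrite -quad_delta. Qed.

Lemma sum_rank1_delta m :
  \sum_l (delta_mx l 0 : 'cV[C]_m) *m adjmx (delta_mx l 0 : 'cV[C]_m) = 1%:M.
Proof.
by rewrite mx1_sum_delta; apply: eq_bigr => l _; rewrite adjmx_delta mul_delta_mx.
Qed.

Lemma sum_rank1_proj m (P : 'M[C]_m) : adjmx P = P -> P *m P = P ->
  \sum_l (P *m delta_mx l 0) *m adjmx (P *m (delta_mx l 0 : 'cV[C]_m)) = P.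
Proof.
move=> P_herm P_idem; under eq_bigr do rewrite adjmxM P_herm mulmxA -(mulmxA P).
by rewrite -mulmx_suml -mulmx_sumr sum_rank1_delta mulmx1 P_idem.
Qed.

Definition rank1_cone m (A : 'M[C]_m) : Prop :=
  exists (I : finType) (c : I -> C) (u : I -> 'cV[C]_m),
    (forall i, 0 <= c i) /\ A = \sum_i c i *: (u i *m adjmx (u i)).

Lemma rank1_cone_psd m (A : 'M[C]_m) : rank1_cone A -> psd A.
Proof.
move=> [I [c [u [c_ge0 ->]]]] v.
rewrite mulmx_sumr mulmx_suml summxE; apply: sumr_ge0 => i _.
rewrite -scalemxAr -scalemxAl mxE quad_rank1 mulrC.
by apply: mulr_ge0 => //; rewrite mulrC; apply: mul_conjC_ge0.
Qed.

End PositiveMatrices.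

Section CompletelyPositive.
Variable R : realType.
Local Notation C := R[i].
Local Notation M2 := 'M[C]_2.

Lemma cp_psd (f : M2 -> M2) (A : M2) : completely_positive f -> psd A -> psd (f A).
Proof.
move=> cpf psdA u.
have psd1 : psd (\mxblock_(i < 1, j < 1) (A : 'M[C]_(2, 2))).
  by move=> v; rewrite quad_mxblock !big_ord1.
by have := cpf 1 (fun _ _ => A) psd1 (\mxcol_i u); rewrite quad_mxblock !big_ord1 mxcolK.
Qed.

Lemma cp_conj (K : M2) (f : M2 -> M2) : completely_positive f ->
  completely_positive (fun X => K *m f X *m adjmx K).
Proof.
move=> cpf n B psdB v; set w := \mxcol_i (adjmx K *m submxcol v i).
have <- : (adjmx w *m \mxblock_(i < n, j < n) (f (B i j) : 'M[C]_(2, 2)) *m w) 0 0 =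
    (adjmx v *m \mxblock_(i < n, j < n) (K *m f (B i j) *m adjmx K : 'M[C]_(2, 2)) *m v) 0 0.
  rewrite !quad_mxblock; apply: eq_bigr => i _; apply: eq_bigr => j _.
  by rewrite !mxcolK adjmxM adjmxK !mulmxA.
exact: cpf.
Qed.

Lemma cp_sum (I : finType) (c : I -> C) (f : I -> M2 -> M2) :
  (forall i, 0 <= c i) -> (forall i, completely_positive (f i)) ->
  completely_positive (fun X => \sum_i c i *: f i X).
Proof.
move=> c_ge0 cpf n B psdB v.
have -> : (adjmx v *m \mxblock_(a < n, b < n)
      (\sum_i c i *: f i (B a b) : 'M[C]_(2, 2)) *m v) 0 0 =
    \sum_i c i * (adjmx v *m \mxblock_(a < n, b < n) (f i (B a b) : 'M[C]_(2, 2)) *m v) 0 0.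
  rewrite quad_mxblock; under [RHS]eq_bigr => i _ do rewrite quad_mxblock mulr_sumr.
  rewrite [RHS]exchange_big; apply: eq_bigr => a _.
  under [RHS]eq_bigr => i _ do rewrite mulr_sumr.
  rewrite [RHS]exchange_big; apply: eq_bigr => b _.
  rewrite mulmx_sumr mulmx_suml summxE; apply: eq_bigr => i _.
  by rewrite -scalemxAr -scalemxAl mxE.
by apply: sumr_ge0 => i _; apply: mulr_ge0; [exact: c_ge0 | exact: cpf].
Qed.

Lemma sandwich_rank1_delta m (u : 'cV[C]_m) (A : 'M[C]_m) (l : 'I_m) :
  let K := u *m adjmx (delta_mx l 0 : 'cV[C]_m) in
  K *m A *m adjmx K = A l l *: (u *m adjmx u).
Proof.
rewrite /= adjmxM adjmxK !mulmxA -(mulmxA u) -(mulmxA _ _ (delta_mx l 0)).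
by rewrite [_ *m _ *m delta_mx l 0]mx11_scalar quad_delta mul_mx_scalar scalemxAl.
Qed.

Lemma cp_trace_prepare (F : M2 -> M2) (t : M2) :
  completely_positive F -> rank1_cone t -> completely_positive (fun X => \tr (F X) *: t).
Proof.
move=> cpF [I [c [u [c_ge0 ->]]]].
pose K i (l : 'I_2) : M2 := u i *m adjmx (delta_mx l 0 : 'cV[C]_2).
have -> : (fun X => \tr (F X) *: \sum_i c i *: (u i *m adjmx (u i))) =
    (fun X => \sum_(il : I * 'I_2) c il.1 *: (K il.1 il.2 *m F X *m adjmx (K il.1 il.2))).
  apply: boolp.funext => X.
  rewrite -(pair_bigA _ (fun i l => c i *: (K i l *m F X *m adjmx (K i l)))).
  rewrite scaler_sumr; apply: eq_bigr => i _ /=.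
  rewrite scalerA mulrC -scalerA -scaler_sumr /mxtrace scaler_suml.
  by congr (_ *: _); apply: eq_bigr => l _; rewrite sandwich_rank1_delta.
have cp_term il : completely_positive (fun X => K il.1 il.2 *m F X *m adjmx (K il.1 il.2)).
  exact: cp_conj.
exact: (cp_sum (fun il => c_ge0 il.1) cp_term).
Qed.

End CompletelyPositive.

Section BlochStates.
Variable R : realType.
Local Notation C := R[i].
Local Notation M2 := 'M[C]_2.

Lemma complexP (x y : C) :
  complex.Re x = complex.Re y -> complex.Im x = complex.Im y -> x = y.
Proof. by case: x => a b; case: y => c d /= -> ->. Qed.

Definition pauli_dot (a1 a2 a3 : R) : M2 :=
  (a1%:C)%C *: pauliX R + (a2%:C)%C *: pauliY R + (a3%:C)%C *: pauliZ R.

Definition bloch_state (r a1 a2 a3 : R) : M2 :=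
  2^-1 *: (1%:M + (r%:C)%C *: pauli_dot a1 a2 a3).

Lemma pauli_dotE a1 a2 a3 : pauli_dot a1 a2 a3 =
  \matrix_(i < 2, j < 2)
    if i == j then (if i == 0 :> nat then a3%:C else - a3%:C)%C
    else if i == 0 :> nat then (a1%:C - 'i * a2%:C)%C else (a1%:C + 'i * a2%:C)%C.
Proof. by apply/matrixP => -[[|[|//]] ?] [[|[|//]] ?]; rewrite !mxE /=; ring. Qed.

Lemma mxtrace_pauli_dot a1 a2 a3 : \tr (pauli_dot a1 a2 a3) = 0.
Proof. by rewrite pauli_dotE /mxtrace !big_ord_recr big_ord0 !mxE /= add0r addrN. Qed.

Lemma adjmx_pauli_dot a1 a2 a3 : adjmx (pauli_dot a1 a2 a3) = pauli_dot a1 a2 a3.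
Proof.
rewrite pauli_dotE; apply/matrixP => -[[|[|//]] ?] [[|[|//]] ?]; rewrite !mxE /=;
  by rewrite -?complexiE -?complexr0; simpc.
Qed.

Lemma pauli_dotN a1 a2 a3 : pauli_dot (- a1) (- a2) (- a3) = - pauli_dot a1 a2 a3.
Proof. by rewrite /pauli_dot !rmorphN !scaleNr !opprD. Qed.

Lemma pauli_dot_sqr a1 a2 a3 : a1 ^+ 2 + a2 ^+ 2 + a3 ^+ 2 = 1 ->
  pauli_dot a1 a2 a3 *m pauli_dot a1 a2 a3 = 1%:M.
Proof.
move=> a_unit; rewrite pauli_dotE; apply/matrixP => -[[|[|//]] ?] [[|[|//]] ?];
  rewrite !mxE !big_ord_recr big_ord0 !mxE /= -?complexiE -?complexr0; simpc;
  by apply: complexP => /=; nra.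
Qed.

Lemma conjC_realC (x : R) : (x%:C)%C^* = (x%:C)%C.
Proof. by apply: complexP => /=; rewrite ?oppr0. Qed.

Lemma invC2 : (2^-1 : C) = ((2^-1 : R)%:C)%C.
Proof. by rewrite fmorphV rmorph_nat. Qed.

Lemma mxtrace_bloch_state r a1 a2 a3 : \tr (bloch_state r a1 a2 a3) = 1.
Proof.
rewrite /bloch_state mxtraceZ mxtraceD mxtraceZ mxtrace_pauli_dot mulr0 addr0.
by rewrite mxtrace1 mulVf // pnatr_eq0.
Qed.

Lemma adjmx_bloch_state r a1 a2 a3 :
  adjmx (bloch_state r a1 a2 a3) = bloch_state r a1 a2 a3.
Proof.
rewrite /bloch_state adjmxZ adjmxD adjmx1 adjmxZ adjmx_pauli_dot.
by rewrite invC2 !conjC_realC.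
Qed.

Lemma bloch_state1_idem a1 a2 a3 : a1 ^+ 2 + a2 ^+ 2 + a3 ^+ 2 = 1 ->
  bloch_state 1 a1 a2 a3 *m bloch_state 1 a1 a2 a3 = bloch_state 1 a1 a2 a3.
Proof.
move=> /pauli_dot_sqr; rewrite /bloch_state rmorph1 scale1r.
move: (pauli_dot a1 a2 a3) => S sqrS; rewrite -scalemxAl -scalemxAr scalerA.
rewrite mulmxDl !mulmxDr !mul1mx mulmx1 sqrS [X in _ + X]addrC.
by rewrite -mulr2n -scalerMnr scalerMnl -mulr_natr mulfVK // pnatr_eq0.
Qed.

Lemma bloch_stateE r a1 a2 a3 : bloch_state r a1 a2 a3 =
  (((1 - r) / 2)%:C)%C *: 1%:M + (r%:C)%C *: bloch_state 1 a1 a2 a3.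
Proof.
rewrite /bloch_state rmorph1 scale1r; move: (pauli_dot a1 a2 a3) => S.
rewrite !scalerDr !scalerA addrA -scalerDl.
congr (_ *: _ + _ *: _); last exact: mulrC.
by rewrite invC2 -?complexr0; simpc; apply: complexP => /=; field.
Qed.

Lemma bloch_state_rank1_cone r a1 a2 a3 : 0 <= r <= 1 ->
  a1 ^+ 2 + a2 ^+ 2 + a3 ^+ 2 = 1 -> rank1_cone (bloch_state r a1 a2 a3).
Proof.
move=> /andP[r_ge0 r_le1] a_unit; set P := bloch_state 1 a1 a2 a3.
exists ('I_2 + 'I_2)%type, (fun i => if i is inl _ then ((1 - r) / 2)%:C else r%:C)%C.
exists (fun i => match i with inl l => delta_mx l 0 | inr l => P *m delta_mx l 0 end).
split => [[l|l]|]; rewrite ?ler0c //; first lra.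
rewrite big_sumType /= -!scaler_sumr sum_rank1_delta sum_rank1_proj.
- exact: bloch_stateE.
- exact: adjmx_bloch_state.
- exact: bloch_state1_idem.
Qed.

Lemma bloch_state_mix r w a1 a2 a3 : 0 < w ->
  bloch_state r a1 a2 a3 =
    (((w + r) / (2 * w))%:C)%C *: bloch_state w a1 a2 a3 +
    ((1 - (w + r) / (2 * w))%:C)%C *: bloch_state w (- a1) (- a2) (- a3).
Proof.
move=> w_gt0; rewrite /bloch_state pauli_dotN; move: (pauli_dot a1 a2 a3) => S.
rewrite scalerN !scalerDr !scalerN !scalerA.
rewrite addrACA -scalerDl -scalerBl invC2.
by congr (_ *: _ + _ *: _); rewrite -?complexr0; simpc; apply: complexP => /=;
  field; rewrite ?gt_eqF.
Qed.

End BlochStates.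

Section Instruments.
Variable R : realType.
Local Notation C := R[i].
Local Notation M2 := 'M[C]_2.
Implicit Types (f : M2 -> M2) (rho X Y : M2) (I : bool -> M2 -> M2).

Lemma linear_map0 f : is_linear_map f -> f 0 = 0.
Proof.
move=> lin_f; have := lin_f 1 0 0; rewrite !scale1r addr0 => ff.
by apply: (addIr (f 0)); rewrite add0r -ff.
Qed.

Lemma linear_mapZ f a X : is_linear_map f -> f (a *: X) = a *: f X.
Proof. by move=> lin_f; rewrite -[a *: X]addr0 lin_f linear_map0 ?addr0. Qed.

Lemma linear_mapD f X Y : is_linear_map f -> f (X + Y) = f X + f Y.
Proof. by move=> lin_f; have := lin_f 1 X Y; rewrite !scale1r. Qed.

Lemma mxtrace_instrument_le I b X : instrument I -> psd X -> \tr (I b X) <= \tr X.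
Proof.
move=> [cpI trI] psdX; rewrite -(trI X) mxtraceD.
have := psd_mxtrace_ge0 (cp_psd (cpI (~~ b)).2 psdX).
by case: b => /= ?; rewrite ?lerDl ?lerDr.
Qed.

Lemma seqprob_le1 rho Ix Iy a b : psd rho -> \tr rho = 1 ->
  instrument Ix -> instrument Iy -> seqprob rho Ix Iy a b <= 1.
Proof.
move=> psd_rho tr_rho Ix_instr Iy_instr.
have psd_Ix : psd (Ix a rho) by apply: cp_psd psd_rho; exact: (Ix_instr.1 a).2.
have := le_trans (mxtrace_instrument_le b Iy_instr psd_Ix)
                 (mxtrace_instrument_le a Ix_instr psd_rho).
by rewrite tr_rho lecE => /andP[].
Qed.

Lemma calB1_le4 p w0 w1 rho I0 I1 : 0 <= p <= 1 ->
  admissible p w0 w1 rho I0 I1 -> calB1 rho I0 I1 <= 4.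
Proof.
move=> p01 [[a1 [a2 [a3 [a_unit ->]]]] [I0_instr [I1_instr _]]].
have psd_rho := rank1_cone_psd (bloch_state_rank1_cone p01 a_unit).
have tr_rho := mxtrace_bloch_state p a1 a2 a3.
have le1 Ix Iy b := @seqprob_le1 _ Ix Iy true b psd_rho tr_rho.
have := le1 _ _ true I0_instr I0_instr; have := le1 _ _ true I1_instr I1_instr.
have := le1 _ _ false I0_instr I1_instr; have := le1 _ _ false I1_instr I0_instr.
rewrite /calB1; lra.
Qed.

End Instruments.

Section MeasurePrepare.
Variable R : realType.
Local Notation C := R[i].
Local Notation M2 := 'M[C]_2.
Implicit Types (rho t X Y : M2) (I : bool -> M2 -> M2).

Definition measure_prepare I t : bool -> M2 -> M2 :=
  fun b => if b then fun X => \tr (I true X) *: t else I false.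

Lemma measure_prepare_plus I t X : measure_prepare I t true X = \tr (I true X) *: t.
Proof. by []. Qed.

Lemma instrument_measure_prepare I t :
  instrument I -> rank1_cone t -> \tr t = 1 -> instrument (measure_prepare I t).
Proof.
move=> [lincpI trI] cone_t tr_t; split => [[]|X] /=.
- split; last exact: cp_trace_prepare (lincpI true).2 cone_t.
  by move=> a X Y; rewrite (lincpI true).1 mxtraceD mxtraceZ scalerDl scalerA.
- exact: lincpI.
- by rewrite mxtraceD mxtraceZ tr_t mulr1 -mxtraceD trI.
Qed.

Lemma admissible_measure_prepare p w0 w1 w rho I0 I1 a1 a2 a3 :
  admissible p w0 w1 rho I0 I1 -> 0 <= w <= 1 -> a1 ^+ 2 + a2 ^+ 2 + a3 ^+ 2 = 1 ->
  admissible p w w1 rho (measure_prepare I0 (bloch_state w a1 a2 a3)) I1.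
Proof.
move=> [rho_len [I0_instr [I1_instr [[q_gt0 _] post1]]]] w01 a_unit.
have tr_t := mxtrace_bloch_state w a1 a2 a3.
have instr' := instrument_measure_prepare I0_instr (bloch_state_rank1_cone w01 a_unit) tr_t.
split; first exact: rho_len.
split; first exact: instr'.
split; first exact: I1_instr.
split; last exact: post1.
rewrite /post_plus_len measure_prepare_plus mxtraceZ tr_t mulr1 scalerA.
rewrite mulVf ?scale1r; last by rewrite gt_eqF.
split; first exact: q_gt0.
by exists a1, a2, a3; split; [exact: a_unit | reflexivity].
Qed.

Definition calB1_branch I0 I1 X : R := complex.Re (\tr (I0 true X) + \tr (I1 false X)).

Definition calB1_rest rho I0 I1 : R :=
  complex.Re (\tr (I1 true (I1 true rho))) + complex.Re (\tr (I0 false (I1 true rho))).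

Lemma calB1_split rho I0 I1 :
  calB1 rho I0 I1 = calB1_branch I0 I1 (I0 true rho) + calB1_rest rho I0 I1.
Proof. by rewrite /calB1 /seqprob /calB1_branch /calB1_rest raddfD /=; lra. Qed.

Lemma calB1_measure_prepare rho I0 I1 t : \tr t = 1 ->
  calB1 rho (measure_prepare I0 t) I1 =
  calB1_branch I0 I1 (\tr (I0 true rho) *: t) + calB1_rest rho I0 I1.
Proof. by move=> tr_t; rewrite calB1_split /calB1_branch /= mxtraceZ tr_t mulr1. Qed.

Lemma Re_realCM (x : R) (z : C) : complex.Re ((x%:C)%C * z) = x * complex.Re z.
Proof. by case: z => a b /=; ring. Qed.

Lemma calB1_branch_mix I0 I1 (q : C) (lam mu : R) X Y : instrument I0 -> instrument I1 ->
  calB1_branch I0 I1 (q *: ((lam%:C)%C *: X + (mu%:C)%C *: Y)) =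
  lam * calB1_branch I0 I1 (q *: X) + mu * calB1_branch I0 I1 (q *: Y).
Proof.
move=> [lin0 _] [lin1 _]; have lin0p := (lin0 true).1; have lin1m := (lin1 false).1.
rewrite scalerDr !scalerA ![q * _]mulrC -!scalerA /calB1_branch.
rewrite !(linear_mapD _ _ lin0p) !(linear_mapD _ _ lin1m).
rewrite !(linear_mapZ _ _ lin0p) !(linear_mapZ _ _ lin1m) !mxtraceD !mxtraceZ.
by rewrite addrACA -!mulrDr raddfD /= !Re_realCM.
Qed.

End MeasurePrepare.

Section Optimum.
Variable R : realType.
Local Notation C := R[i].
Local Notation M2 := 'M[C]_2.

Lemma convex_comb_le_max (lam x y : R) : 0 <= lam <= 1 ->
  lam * x + (1 - lam) * y <= Num.max x y.
Proof.
move=> /andP[lam_ge0 lam_le1]; rewrite le_max.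
by have [yx | /ltW xy] := leP y x; apply/orP; [left | right]; nra.
Qed.

Lemma admissible_improve_w0 (p w0 w0' w1 : R) (rho : M2) I0 I1 :
  0 <= w0 <= w0' -> w0' <= 1 -> admissible p w0 w1 rho I0 I1 ->
  exists I0', admissible p w0' w1 rho I0' I1 /\ calB1 rho I0 I1 <= calB1 rho I0' I1.
Proof.
move=> /andP[w0_ge0 w0_le] w0'_le1 adm.
have [w0'_le0 | w0'_gt0] := lerP w0' 0.
  have <- : w0 = w0' by apply: le_anti; rewrite w0_le (le_trans w0'_le0 w0_ge0).
  by exists I0.
case: (adm) => _ [I0_instr [I1_instr [[q_gt0 [a1 [a2 [a3 [a_unit post0]]]]] _]]].
set q := \tr (I0 true rho) in q_gt0 post0 *.
have I0_rho : I0 true rho = q *: bloch_state w0 a1 a2 a3.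
  by rewrite -[bloch_state _ _ _ _]post0 scalerA mulfV ?scale1r ?gt_eqF.
have mix := bloch_state_mix w0 a1 a2 a3 w0'_gt0.
set lam := (w0' + w0) / (2 * w0') in mix.
have lam01 : 0 <= lam <= 1.
  by rewrite divr_ge0 ?ler_pdivrMr ?mulr_gt0 //=; lra.
set tp := bloch_state w0' a1 a2 a3; set tm := bloch_state w0' (- a1) (- a2) (- a3).
have a_unitN : (- a1) ^+ 2 + (- a2) ^+ 2 + (- a3) ^+ 2 = 1 by rewrite !sqrrN.
have branch_mix : calB1_branch I0 I1 (I0 true rho) =
    lam * calB1_branch I0 I1 (q *: tp) + (1 - lam) * calB1_branch I0 I1 (q *: tm).
  by rewrite I0_rho mix calB1_branch_mix.
have w0'_01 : 0 <= w0' <= 1 by rewrite ltW.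
have := convex_comb_le_max
  (calB1_branch I0 I1 (q *: tp)) (calB1_branch I0 I1 (q *: tm)) lam01.
rewrite -branch_mix le_max calB1_split => /orP[le_p | le_m].
- exists (measure_prepare I0 tp).
  split; first exact: admissible_measure_prepare adm w0'_01 a_unit.
  by rewrite calB1_measure_prepare ?mxtrace_bloch_state // -/q lerD2r.
- exists (measure_prepare I0 tm).
  split; first exact: admissible_measure_prepare adm w0'_01 a_unitN.
  by rewrite calB1_measure_prepare ?mxtrace_bloch_state // -/q lerD2r.
Qed.

Lemma sup_le_dominated (A B : set R) :
  (forall a, A a -> exists2 b, B b & a <= b) -> (B !=set0 -> A !=set0)%classic ->
  has_ubound B -> sup A <= sup B.
Proof.
move=> dom neB ubB; have [A0 | /set0P neA] := eqVneq A set0.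
  have [B0 | /set0P/neB/set0P] := eqVneq B set0; first by rewrite A0 B0 lexx.
  by rewrite A0 eqxx.
by apply: ge_sup neA _ => a /dom[b Bb le_ab]; exact: le_trans le_ab (ub_le_sup ubB Bb).
Qed.

Lemma B1_le_w0 (p w0 w0' w1 : R) : 0 <= p <= 1 -> 0 <= w0 <= w0' -> w0' <= 1 ->
  B1 p w0 w1 <= B1 p w0' w1.
Proof.
move=> p01 w0_le w0'_le1; apply: sup_le_dominated.
- move=> _ [rho [I0 [I1 [adm ->]]]].
  have [I0' [adm' le_B]] := admissible_improve_w0 w0_le w0'_le1 adm.
  by exists (calB1 rho I0' I1) => //; exists rho, I0', I1.
- move=> [_ [rho [I0 [I1 [adm _]]]]].
  have w0_01 : 0 <= w0 <= 1 by case/andP: w0_le => -> /le_trans ->.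
  have e3_unit : 0 ^+ 2 + 0 ^+ 2 + 1 ^+ 2 = 1 :> R by rewrite expr1n !expr0n /= !add0r.
  set I0' := measure_prepare I0 (bloch_state w0 0 0 1).
  exists (calB1 rho I0' I1), rho, I0', I1.
  by split; first exact: admissible_measure_prepare adm w0_01 e3_unit.
- by exists 4 => _ [rho [I0 [I1 [adm ->]]]]; exact: calB1_le4 adm.
Qed.

Lemma admissibleC (p w0 w1 : R) (rho : M2) I0 I1 :
  admissible p w0 w1 rho I0 I1 -> admissible p w1 w0 rho I1 I0.
Proof. by move=> [? [? [? [? ?]]]]. Qed.

Lemma calB1C (rho : M2) I0 I1 : calB1 rho I1 I0 = calB1 rho I0 I1.
Proof. by rewrite /calB1; lra. Qed.

Lemma B1C (p w0 w1 : R) : B1 p w0 w1 = B1 p w1 w0.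
Proof.
rewrite /B1; apply: congr1; apply/seteqP; split => _ [rho [I0 [I1 [adm ->]]]];
  by exists rho, I1, I0; split; [exact: admissibleC | rewrite calB1C].
Qed.

End Optimum.

Theorem mainTheorem4 (R : realType) (p : R) (hp : 0 <= p <= 1) :
  (forall w0 w0' w1 : R, 0 <= w0 <= 1 -> 0 <= w0' <= 1 -> 0 <= w1 <= 1 ->
     w0 <= w0' -> B1 p w0 w1 <= B1 p w0' w1) /\
  (forall w0 w1 w1' : R, 0 <= w0 <= 1 -> 0 <= w1 <= 1 -> 0 <= w1' <= 1 ->
     w1 <= w1' -> B1 p w0 w1 <= B1 p w0 w1') /\
  (forall w0 w1 : R, 0 <= w0 <= 1 -> 0 <= w1 <= 1 ->
     B1 p w0 w1 <= B1 p (Num.max w0 w1) (Num.max w0 w1)).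
Proof.
have mono0 w0 w0' w1 : 0 <= w0 <= 1 -> 0 <= w0' <= 1 -> w0 <= w0' ->
    B1 p w0 w1 <= B1 p w0' w1.
  by move=> /andP[w0_ge0 _] /andP[_ w0'_le1] w0_le; apply: B1_le_w0; rewrite ?w0_ge0.
have mono1 w0 w1 w1' : 0 <= w1 <= 1 -> 0 <= w1' <= 1 -> w1 <= w1' ->
    B1 p w0 w1 <= B1 p w0 w1'.
  by rewrite (B1C p w0 w1) (B1C p w0 w1'); exact: mono0.
split; [by move=> *; exact: mono0 | split; first by move=> *; exact: mono1].
move=> w0 w1 w0_01 w1_01.
have wmax_01 : 0 <= Num.max w0 w1 <= 1.
  by case/andP: w0_01 => ? ?; case/andP: w1_01 => ? ?; rewrite ge_max le_max; lra.
apply: le_trans (mono0 _ _ w1 w0_01 wmax_01 _) (mono1 _ _ _ w1_01 wmax_01 _).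
- by rewrite le_max lexx.
- by rewrite le_max lexx orbT.
Qed.
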